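(* There is an absolute constant $c>0$ such that for all $\varepsilon\in(0,\tfrac18)$, $\mathsf C_{\rm rand}(\varepsilon;\mathsf O^{1^{\rm st}})\ge c/\varepsilon$.
   Context: A function $f:\mathbb R^d\to\mathbb R$ is $\beta$-smooth if it is continuously differentiable and $\nabla f$ is $\beta$-Lipschitz. A point $x$ is an $\varepsilon$-stationary point of $f$ if $\|\nabla f(x)\|<\varepsilon$. Let $\mathcal F(\beta,\Delta,d)$ be the class of $\beta$-smooth $f:\mathbb R^d\to\mathbb R$ with $f(0)-\inf f\le\Delta$. The oracle $\mathsf O^{1^{\rm st}}$ returns $\nabla f(x)$ on query $x$; the oracle $\mathsf O^{0^{\rm th}+1^{\rm st}}$ returns $(f(x),\nabla f(x))$. A deterministic algorithm chooses queries $x_1,x_2,\dots\in\mathbb R^d$ where each $x_{i}$ is a (measurable) function of $x_1,\dots,x_{i-1}$ and the oracle responses at them; a randomized algorithm is the same except that each $x_i$ may also depend on a random seed $U$ independent of $f$. $\mathsf C_{\det}(\varepsilon;\beta,\Delta,d,\mathsf O)$ is the least $N$ such that some deterministic algorithm using $\mathsf O$ has, for every $f\in\mathcal F(\beta,\Delta,d)$, an $\varepsilon$-stationary point of $f$ among $x_1,\dots,x_N$; $\mathsf C_{\rm rand}(\varepsilon;\beta,\Delta,d,\mathsf O)$ is the least $N$ such that some randomized algorithm using $\mathsf O$ has, for every $f\in\mathcal F(\beta,\Delta,d)$, with probability at least $1/2$ an $\varepsilon$-stationary point of $f$ among $x_1,\dots,x_N$. Abbreviate $\mathsf C_*(\varepsilon;\mathsf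 O)=\mathsf C_*(\varepsilon;1,1,1,\mathsf O)$ (one-dimensional, $1$-smooth, objective gap at most $1$). *)

From HB Require Import structures.
From mathcomp Require Import all_boot all_order all_algebra.
From mathcomp Require Import all_classical all_reals all_analysis.
Set Implicit Arguments. Unset Strict Implicit. Unset Printing Implicit Defensive.
Import Order.TTheory GRing.Theory Num.Theory.
Import numFieldNormedType.Exports.
Local Open Scope classical_set_scope.
Local Open Scope ring_scope.

Section Defs.
Context {R : realType}.

Definition smooth1 (f : R -> R) : Prop :=
  (forall x, derivable f x 1) /\
  (forall x y : R, `|(derive1 f) x - (derive1 f) y| <= `|x - y|).

(* The class F(1,1,1): 1-smooth f : R -> R with f(0) - inf f <= 1,
   i.e. f(0) - f(x) <= 1 for every x. *)
Definition in_class (f : R -> R) : Prop :=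
  smooth1 f /\ (forall x, f 0 - f x <= 1).

Definition stationary (eps : R) (f : R -> R) (x : R) : Prop := `|(derive1 f) x| < eps.

(* A randomized algorithm with seed space T: the (n+1)-st query (index n) is
   A n u h, where u is the seed and h the history [(x_1,g_1);...;(x_n,g_n)]
   of previous queries and oracle responses. *)
Definition rand_alg (T : Type) := nat -> T -> seq (R * R) -> R.

Fixpoint history (T : Type) (A : rand_alg T) (g : R -> R) (u : T) (n : nat)
  : seq (R * R) :=
  match n with
  | 0 => [::]
  | n'.+1 => let h := history A g u n' in
             let q := A n' u h in rcons h (q, g q)
  end.

Definition query (T : Type) (A : rand_alg T) (g : R -> R) (u : T) (n : nat) : R :=
  A n u (history A g u n).

Definition measurable_alg (d : measure_display) (T : measurableType d)
  (A : rand_alg T) : Prop :=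
  forall f : R -> R, in_class f ->
  forall n, measurable_fun [set: T] (fun u => query A (derive1 f) u n).

Definition rand_succeeds (d : measure_display) (T : measurableType d)
  (P : probability T R) (A : rand_alg T) (N : nat) (eps : R) : Prop :=
  forall f : R -> R, in_class f ->
  ((1/2 : R)%:E <= P [set u | exists2 i, (i < N)%N &
                         stationary eps f (query A (derive1 f) u i)])%E.

End Defs.

(* The hard functions have derivative [2 eps] everywhere except on unit-width
   bumps, repeated with period [p = 1 / (8 eps)], where the derivative dips to
   [2 eps - 1/2 < 0]; the eps-stationary points all lie in the bumps.  Shifting
   by [j = 0, ..., K - 1] with [K ~ p] gives [K] functions whose bumps are
   pairwise disjoint.  As long as an algorithm queries outside the bumps of
   [f_j], its history is the one it would get from the constant oracle [2 eps];
   hence for a fixed step [i] the events "the [i]-th query is the first to hit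
   a bump of [f_j]" are disjoint in [j].  Summing the success probabilities,
   [K / 2 <= sum_j sum_(i < N) P(E_ij) <= N]. *)

From HB Require Import structures.
From mathcomp Require Import all_boot all_order all_algebra.
From mathcomp Require Import all_classical all_reals all_analysis.
From mathcomp Require Import measurable_realfun.
From mathcomp Require Import ring lra zify.
Import Order.TTheory GRing.Theory Num.Theory.
Import numFieldNormedType.Exports.
Local Open Scope classical_set_scope.
Local Open Scope ring_scope.

Section Tent.
Variables (R : realType) (r : R).
Implicit Types s t : R.

Definition tent s : R :=
  if s <= - r then 0 else if s <= 0 then s + r else if s <= r then r - s else 0.

Definition tent_primitive s : R :=
  if s <= - r then 0 else if s <= 0 then (s + r) ^+ 2 / 2
  else if s <= r then r ^+ 2 - (r - s) ^+ 2 / 2 else r ^+ 2.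

Lemma tent_ge0 s : 0 < r -> 0 <= tent s.
Proof.
move=> r_gt0; rewrite /tent; case: (lerP s (- r)) => h1; case: (lerP s 0) => h2;
  case: (lerP s r) => h3; lra.
Qed.

Lemma tent_lipschitz s t : `|tent s - tent t| <= `|s - t|.
Proof.
rewrite /tent.
case: (lerP s (- r)) => h1; case: (lerP s 0) => h2; case: (lerP s r) => h3;
case: (lerP t (- r)) => h4; case: (lerP t 0) => h5; case: (lerP t r) => h6;
  have n1 := ler_norm (s - t); have n2 := ler_norm (t - s); rewrite distrC in n2;
  rewrite ler_norml; apply/andP; split; lra.
Qed.

Lemma tent_gt0_itv s : 0 < tent s -> - r < s < r.
Proof.
rewrite /tent; case: (lerP s (- r)) => h1; case: (lerP s 0) => h2;
  case: (lerP s r) => h3 h; apply/andP; split; lra.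
Qed.

Lemma tent_out s : 0 < r -> s <= - r \/ r <= s -> tent s = 0.
Proof.
move=> r_gt0; rewrite /tent => -[h|h]; first by rewrite h.
case: (lerP s (- r)) => h1 //; case: (lerP s 0) => h2; first lra.
by case: (lerP s r) => h3 //; lra.
Qed.

Lemma tent_primitive_left s : s <= - r -> tent_primitive s = 0.
Proof. by move=> h; rewrite /tent_primitive h. Qed.

Lemma tent_primitive_right s : 0 < r -> r <= s -> tent_primitive s = r ^+ 2.
Proof.
move=> r_gt0 h; rewrite /tent_primitive.
case: (lerP s (- r)) => h1; first lra.
case: (lerP s 0) => h2; first lra.
case: (lerP s r) => h3 //.
have -> : s = r by lra.
by rewrite subrr expr0n /= mul0r subr0.
Qed.

Lemma tent_primitive_itv s : 0 < r -> 0 <= tent_primitive s <= r ^+ 2.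
Proof.
move=> r_gt0; rewrite /tent_primitive.
case: (lerP s (- r)) => h1; case: (lerP s 0) => h2; case: (lerP s r) => h3;
  apply/andP; split; rewrite ?expr2; try (exfalso; lra); try lra; try nra.
Qed.

Lemma tent_primitive_taylor s t : 0 < r ->
  `|tent_primitive t - tent_primitive s - tent s * (t - s)| <= (t - s) ^+ 2 / 2.
Proof.
move=> r_gt0; rewrite /tent_primitive /tent.
case: (lerP s (- r)) => h1; case: (lerP s 0) => h2; case: (lerP s r) => h3;
case: (lerP t (- r)) => h4; case: (lerP t 0) => h5; case: (lerP t r) => h6;
  rewrite ler_norml; apply/andP; split; rewrite !expr2;
  have := sqr_ge0 (t - s); rewrite expr2 => hq;
  try (exfalso; lra); try lra; try nra.
Qed.

End Tent.
Arguments tent {R}. Arguments tent_primitive {R}.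
Arguments tent_ge0 {R r}. Arguments tent_lipschitz {R}.
Arguments tent_gt0_itv {R r}. Arguments tent_out {R r}.
Arguments tent_primitive_left {R r}. Arguments tent_primitive_right {R r}.
Arguments tent_primitive_itv {R r}. Arguments tent_primitive_taylor {R r}.

Section Periodic.
Variables (R : realType) (p : R).

Definition pmod x : R := x - (Num.floor (x / p))%:~R * p.

Lemma pmod_itv x : 0 < p -> 0 <= pmod x < p.
Proof.
move=> p_gt0; have /andP[h1 h2] := floor_itv (x / p).
rewrite intrD -(ler_pM2r p_gt0) -(ltr_pM2r p_gt0) in h1 h2.
rewrite mulrAC -mulrA divff ?gt_eqF // mulr1 in h1 h2.
rewrite /pmod; apply/andP; split; lra.
Qed.

Lemma pmod_shift x (n : int) : exists k : int, x - n%:~R * p - pmod x = k%:~R * p.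
Proof. by exists (Num.floor (x / p) - n); rewrite /pmod intrB; ring. Qed.

Lemma pmod_window x (n : int) : 0 < p -> - p < x - n%:~R * p < 2 * p ->
  [\/ pmod x = x - n%:~R * p + p, pmod x = x - n%:~R * p
    | pmod x = x - n%:~R * p - p].
Proof.
move=> p_gt0 /andP[b1 b2]; have /andP[q1 q2] := pmod_itv x p_gt0.
have [k ek] := pmod_shift x n.
have k_gt : (-2 : int)%:~R < k%:~R :> R.
  by rewrite intrN -(ltr_pM2r p_gt0); lra.
have k_lt : k%:~R < (2 : int)%:~R :> R by rewrite -(ltr_pM2r p_gt0); lra.
rewrite ltr_int in k_gt; rewrite ltr_int in k_lt.
have : k = -1 \/ k = 0 \/ k = 1 by lia.
case=> [kE|[kE|kE]]; move: ek; rewrite kE ?mulN1r ?mul0r ?mul1r => ek.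
- by apply: Or31; lra.
- by apply: Or32; lra.
- by apply: Or33; lra.
Qed.

End Periodic.
Arguments pmod {R}. Arguments pmod_itv {R}. Arguments pmod_shift {R}.
Arguments pmod_window {R}.

Section HardFunction.
Variables (R : realType) (r c p : R).

(* On each period, [c s] minus a smoothed step of height [r ^+ 2] centred at
   [p / 2]; when [c * p = r ^+ 2] the step exactly compensates the linear
   growth, so the periodic extension is smooth and bounded. *)
Definition hard_profile s : R := c * s - tent_primitive r (s - p / 2).
Definition hard_fun x : R := hard_profile (pmod p x).
Definition bumps x : R := tent r (pmod p x - p / 2).

Lemma bumps_window x (n : int) : 0 < r -> 2 * r < p ->
  r - p / 2 <= x - n%:~R * p <= 3 * p / 2 - r ->
  bumps x = tent r (x - n%:~R * p - p / 2).
Proof.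
move=> r_gt0 rp /andP[b1 b2]; rewrite /bumps.
have p_gt0 : 0 < p by lra.
have range : - p < x - n%:~R * p < 2 * p by apply/andP; split; lra.
have /andP[q1 q2] := pmod_itv p x p_gt0.
case: (pmod_window p x n p_gt0 range) => e; rewrite e // !tent_out //;
  (by left; lra) || (by right; lra).
Qed.

Lemma hard_fun_window x (n : int) : 0 < r -> 2 * r < p -> c * p = r ^+ 2 ->
  r - p / 2 <= x - n%:~R * p <= 3 * p / 2 - r ->
  hard_fun x = hard_profile (x - n%:~R * p).
Proof.
move=> r_gt0 rp cp /andP[b1 b2]; rewrite /hard_fun /hard_profile.
have p_gt0 : 0 < p by lra.
have range : - p < x - n%:~R * p < 2 * p by apply/andP; split; lra.
have /andP[q1 q2] := pmod_itv p x p_gt0.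
case: (pmod_window p x n p_gt0 range) => e; rewrite e //.
- have -> : tent_primitive r (x - n%:~R * p + p - p / 2) = r ^+ 2.
    by apply: tent_primitive_right; lra.
  have -> : tent_primitive r (x - n%:~R * p - p / 2) = 0.
    by apply: tent_primitive_left; lra.
  by rewrite -cp; ring.
- have -> : tent_primitive r (x - n%:~R * p - p - p / 2) = 0.
    by apply: tent_primitive_left; lra.
  have -> : tent_primitive r (x - n%:~R * p - p / 2) = r ^+ 2.
    by apply: tent_primitive_right; lra.
  by rewrite -cp; ring.
Qed.

Lemma hard_fun_taylor x y : 0 < r -> 2 * r < p -> c * p = r ^+ 2 ->
  `|y - x| < p / 2 - r ->
  `|hard_fun y - hard_fun x - (c - bumps x) * (y - x)| <= 1 / 2 * (y - x) ^+ 2.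
Proof.
move=> r_gt0 rp cp; rewrite ltr_norml => /andP[d1 d2].
set n := Num.floor (x / p).
have /andP[q1 q2] : 0 <= pmod p x < p by apply: pmod_itv; lra.
have wx : r - p / 2 <= x - n%:~R * p <= 3 * p / 2 - r.
  by apply/andP; rewrite /pmod in q1 q2; split; lra.
have wy : r - p / 2 <= y - n%:~R * p <= 3 * p / 2 - r.
  by apply/andP; rewrite /pmod in q1 q2; split; lra.
rewrite (hard_fun_window _ _ r_gt0 rp cp wx) (hard_fun_window _ _ r_gt0 rp cp wy).
rewrite (bumps_window _ _ r_gt0 rp wx) /hard_profile.
have := tent_primitive_taylor (x - n%:~R * p - p / 2) (y - n%:~R * p - p / 2) r_gt0.
have -> : y - n%:~R * p - p / 2 - (x - n%:~R * p - p / 2) = y - x by ring.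
set Qy := tent_primitive _ (y - _ - _); set Qx := tent_primitive _ (x - _ - _).
set tx := tent _ _ => h.
rewrite (_ : _ - _ - _ = - (Qy - Qx - tx * (y - x))); last by ring.
rewrite normrN; lra.
Qed.

Lemma hard_fun_itv x : 0 < r -> 0 < p -> c * p = r ^+ 2 -> 0 <= c ->
  - r ^+ 2 <= hard_fun x <= r ^+ 2.
Proof.
move=> r_gt0 p_gt0 cp c_ge0; have /andP[q1 q2] := pmod_itv p x p_gt0.
have /andP[b1 b2] := tent_primitive_itv (pmod p x - p / 2) r_gt0.
rewrite /hard_fun /hard_profile; apply/andP; split; nra.
Qed.

(* Off its own period window the tent vanishes, so [bumps] dominates it. *)
Lemma tent_le_bumps y (n : int) : 0 < r -> 2 * r < p ->
  tent r (y - n%:~R * p - p / 2) <= bumps y.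
Proof.
move=> r_gt0 rp.
have /andP[q1 q2] : 0 <= pmod p y < p by apply: pmod_itv; lra.
have [k ek] := pmod_shift p y n.
have [k0|[k1|k1]] : k = 0 \/ (1 <= k)%R \/ (k <= -1)%R by lia.
- rewrite k0 mul0r in ek; rewrite /bumps.
  by have -> : pmod p y = y - n%:~R * p by lra.
- rewrite -(ler_int R) in k1.
  have hk : p <= k%:~R * p by rewrite -{1}[p]mul1r ler_pM2r //; lra.
  by rewrite tent_out //; [apply: tent_ge0 | right; lra].
- rewrite -(ler_int R) in k1.
  have hk : k%:~R * p <= -1 * p by rewrite ler_pM2r ?intrN //; lra.
  by rewrite tent_out //; [apply: tent_ge0 | left; lra].
Qed.

Lemma bumps_lipschitz x y : 0 < r -> 2 * r < p -> `|bumps x - bumps y| <= `|x - y|.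
Proof.
move=> r_gt0 rp.
have half a b : bumps a - bumps b <= `|a - b|.
  set n := Num.floor (a / p).
  have -> : bumps a = tent r (a - n%:~R * p - p / 2) by [].
  have := tent_le_bumps b n r_gt0 rp.
  have := tent_lipschitz r (a - n%:~R * p - p / 2) (b - n%:~R * p - p / 2).
  have -> : a - n%:~R * p - p / 2 - (b - n%:~R * p - p / 2) = a - b by ring.
  have := ler_norm (tent r (a - n%:~R * p - p / 2) - tent r (b - n%:~R * p - p / 2)).
  lra.
rewrite ler_norml (half x y) andbT.
by have := half y x; rewrite distrC; lra.
Qed.

Lemma bumps_disjoint a b x : 0 < r -> 2 * r < p -> 2 * r <= b - a <= p - 2 * r ->
  0 < bumps (x - a) -> 0 < bumps (x - b) -> False.
Proof.
move=> r_gt0 rp /andP[h1 h2] /tent_gt0_itv /andP[a1 a2] /tent_gt0_itv /andP[b1 b2].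
rewrite /pmod in a1 a2 b1 b2.
set m := Num.floor ((x - a) / p) in a1 a2.
set n := Num.floor ((x - b) / p) in b1 b2.
have [e|[e|e]] : m = n \/ (1 <= m - n)%R \/ (m - n <= -1)%R by lia.
- by rewrite e in a1 a2; lra.
- rewrite -(ler_int R) intrB in e.
  have : p <= (m%:~R - n%:~R) * p by rewrite -{1}[p]mul1r ler_pM2r //; lra.
  nra.
- rewrite -(ler_int R) intrB in e.
  have : (m%:~R - n%:~R) * p <= -1 * p by rewrite ler_pM2r ?intrN //; lra.
  nra.
Qed.

End HardFunction.
Arguments hard_fun {R}. Arguments bumps {R}.
Arguments hard_fun_taylor {R r c p}. Arguments hard_fun_itv {R r c p}.
Arguments bumps_lipschitz {R r p}. Arguments bumps_disjoint {R r p}.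

Section RealAnalysis.
Variable R : realType.

Lemma lipschitz1_continuous (g : R -> R) :
  (forall x y, `|g x - g y| <= `|x - y|) -> continuous g.
Proof.
move=> g_lip x; apply/cvgrPdist_lt => e e_gt0.
near=> y; apply: le_lt_trans (g_lip x y) _.
by near: y; exists e => // z /=.
Unshelve. all: by end_near.
Qed.

Lemma quadratic_approx_derive1 (f : R -> R) (x g k d : R) : 0 < d -> 0 <= k ->
  (forall y, `|y - x| < d -> `|f y - f x - g * (y - x)| <= k * (y - x) ^+ 2) ->
  derivable f x 1 /\ derive1 f x = g.
Proof.
move=> d_gt0 k_ge0 approx.
have cv : (fun h => h^-1 *: (f (h + x) - f x)) @ 0^' --> g.
  apply/cvgrPdist_lt => e e_gt0.
  have m_gt0 : 0 < Num.min d (e / (k + 1)).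
    by rewrite lt_min d_gt0 /=; apply: divr_gt0 => //; lra.
  near=> t.
  have ht : `|t| < Num.min d (e / (k + 1)) by near: t; exact: dnbhs0_lt.
  have t0 : t != 0 by near: t; exact: nbhs_dnbhs_neq.
  move: ht; rewrite lt_min => /andP[htd hte].
  have := approx (t + x); rewrite addrK => /(_ htd) Ht.
  have tn : 0 < `|t| by rewrite normr_gt0.
  have -> : g - t^-1 *: (f (t + x) - f x) = - (t^-1 * (f (t + x) - f x - g * t)).
    by rewrite /GRing.scale /=; field.
  rewrite normrN normrM normrV ?unitfE //.
  rewrite -(ltr_pM2l tn) mulrA mulfV ?lt0r_neq0 // mul1r.
  apply: (le_lt_trans Ht).
  have -> : t ^+ 2 = `|t| * `|t| by rewrite -normrM -expr2 ger0_norm // sqr_ge0.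
  rewrite ltr_pdivlMr in hte; last lra.
  nra.
split; last exact: cvg_lim.
apply/cvg_ex; exists g; apply: cvg_trans cv; apply: near_eq_cvg; near=> h.
by rewrite /= /shift [h *: 1]mulr1.
Unshelve. all: by end_near.
Qed.

End RealAnalysis.

Section ShiftedHardFunction.
Variables (R : realType) (r c p a : R).

Lemma shifted_hard_fun_derive x : 0 < r -> 2 * r < p -> c * p = r ^+ 2 ->
  derivable (fun z => hard_fun r c p (z - a)) x 1 /\
  derive1 (fun z => hard_fun r c p (z - a)) x = c - bumps r p (x - a).
Proof.
move=> r_gt0 rp cp.
apply: (@quadratic_approx_derive1 R _ x _ (1 / 2) (p / 2 - r)); [lra | lra |].
move=> y hy; have := hard_fun_taylor (x - a) (y - a) r_gt0 rp cp.
rewrite (_ : y - a - (x - a) = y - x); last by ring.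
by apply.
Qed.

Lemma derive1_shifted_hard_fun : 0 < r -> 2 * r < p -> c * p = r ^+ 2 ->
  derive1 (fun z => hard_fun r c p (z - a)) = fun x => c - bumps r p (x - a).
Proof.
move=> r_gt0 rp cp; apply/funext => x.
by case: (shifted_hard_fun_derive x r_gt0 rp cp).
Qed.

Lemma shifted_hard_fun_in_class : 0 < r -> 2 * r < p -> c * p = r ^+ 2 ->
  0 <= c -> 2 * r ^+ 2 <= 1 -> in_class (fun z => hard_fun r c p (z - a)).
Proof.
move=> r_gt0 rp cp c_ge0 r_small; split; first split.
- by move=> x; case: (shifted_hard_fun_derive x r_gt0 rp cp).
- move=> x y; rewrite derive1_shifted_hard_fun //.
  have -> : c - bumps r p (x - a) - (c - bumps r p (y - a))
          = bumps r p (y - a) - bumps r p (x - a) by ring.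
  have -> : x - y = - (y - a - (x - a)) by ring.
  by rewrite normrN bumps_lipschitz.
- move=> x; have p_gt0 : 0 < p by lra.
  have /andP[f0_lo f0_hi] := hard_fun_itv (0 - a) r_gt0 p_gt0 cp c_ge0.
  have /andP[fx_lo fx_hi] := hard_fun_itv (x - a) r_gt0 p_gt0 cp c_ge0.
  lra.
Qed.

End ShiftedHardFunction.

Lemma shifted_hard_grads_disjoint (R : realType) (r c p : R) (K j k : nat) x :
  0 < r -> 2 * r < p -> c * p = r ^+ 2 -> 2 * r <= 1 -> K%:R - 1 <= p - 2 * r ->
  (j < K)%N -> (k < K)%N ->
  derive1 (fun z => hard_fun r c p (z - j%:R)) x <> c ->
  derive1 (fun z => hard_fun r c p (z - k%:R)) x <> c -> j = k.
Proof.
move=> r_gt0 rp cp r_small K_small jK kK.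
rewrite !derive1_shifted_hard_fun //.
have bumps_gt0 (a : R) : c - bumps r p (x - a) <> c -> 0 < bumps r p (x - a).
  move=> ne; rewrite lt_def tent_ge0 // andbT; apply/eqP => b0.
  by apply: ne; rewrite b0 subr0.
move=> /bumps_gt0 bj /bumps_gt0 bk.
wlog jk : j k jK kK bj bk / (j < k)%N.
  move=> sym; case: (ltngtP j k) => [jk|kj|//]; first exact: sym.
  by apply/esym/sym.
have jk_le : (j <= k)%N by exact: ltnW.
have gap : 1 <= k%:R - j%:R :> R by rewrite -natrB // ler1n subn_gt0.
have span : k%:R - j%:R + 1 <= K%:R :> R.
  by rewrite -natrB // natr1 ler_nat; lia.
exfalso; apply: (bumps_disjoint j%:R k%:R x r_gt0 rp _ bj bk).
by apply/andP; split; lra.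
Qed.

Section Counting.
Variables (R : realType) (d : measure_display) (T : measurableType d).
Variables (P : probability T R) (A : @rand_alg R T).

Lemma history_eq (g g' : R -> R) u i :
  (forall k, (k < i)%N -> g (query A g u k) = g' (query A g u k)) ->
  history A g u i = history A g' u i.
Proof.
elim: i => [//|i IH] same /=.
have IHi : history A g u i = history A g' u i.
  by apply: IH => k ki; apply: same; lia.
by move: (same i (ltnSn i)); rewrite /query IHi => ->.
Qed.

Lemma measurableT_preimage (h : T -> R) (Y : set R) :
  measurable_fun setT h -> measurable Y -> measurable (h @^-1` Y).
Proof. by move=> mh mY; rewrite -[_ @^-1` _]setTI; exact: mh. Qed.

Definition finds_stationary (f : R -> R) (N : nat) (eps : R) : set T :=
  [set u | exists2 i, (i < N)%N & stationary eps f (query A (derive1 f) u i)].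

Definition first_departure (g : R -> R) (c0 : R) (i : nat) : set T :=
  (fun u => g (query A g u i)) @^-1` (~` [set c0]) `&`
  \bigcap_(k in `I_i) (fun u => g (query A g u k)) @^-1` [set c0].

Lemma first_departure_query {g c0 i u} : first_departure g c0 i u ->
  query A g u i = query A (fun=> c0) u i.
Proof. by move=> [_ before]; rewrite /query (@history_eq g (fun=> c0)). Qed.

Lemma measurable_first_departure g c0 i :
  (forall k, measurable_fun setT (fun u => g (query A g u k))) ->
  measurable (first_departure g c0 i).
Proof.
move=> mg; apply: measurableI.
  by apply: measurableT_preimage => //; apply: measurableC; exact: measurable_set1.
apply: fin_bigcap_measurable; first exact: finite_II.
by move=> k _; apply: measurableT_preimage => //; exact: measurable_set1.
Qed.

Lemma first_departure_cover g c0 N u :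
  (exists2 i, (i < N)%N & g (query A g u i) <> c0) ->
  (\big[setU/set0]_(i < N) first_departure g c0 i) u.
Proof.
move=> [i0 i0N ne0]; rewrite -bigcup_mkord.
have ex : exists i, g (query A g u i) != c0 by exists i0; apply/eqP.
case: (ex_minnP ex) => i /eqP ne minimal.
have ii0 : (i <= i0)%N by apply: minimal; apply/eqP.
exists i; first by rewrite /=; lia.
split=> // k /= ki; apply/eqP; apply: contraT => nek.
by have := minimal k nek; lia.
Qed.

Variables (N K : nat) (eps c0 : R) (F : nat -> R -> R).
Hypotheses (A_meas : measurable_alg A) (A_succ : rand_succeeds P A N eps).
Hypothesis F_class : forall j, (j < K)%N -> in_class (F j).
Hypothesis c0_not_stationary : eps <= `|c0|.
Hypothesis F_departures_disjoint : forall j k x, (j < K)%N -> (k < K)%N ->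
  derive1 (F j) x <> c0 -> derive1 (F k) x <> c0 -> j = k.

Lemma measurable_grad_query {j} i : (j < K)%N ->
  measurable_fun setT (fun u => derive1 (F j) (query A (derive1 (F j)) u i)).
Proof.
move=> jK; have [[_ F_lip] _] := F_class j jK.
apply: measurableT_comp (A_meas (F j) (F_class j jK) i).
by apply: continuous_measurable_fun; exact: lipschitz1_continuous.
Qed.

Lemma measurable_finds_stationary j : (j < K)%N ->
  measurable (finds_stationary (F j) N eps).
Proof.
move=> jK; have -> : finds_stationary (F j) N eps = \bigcup_(i in `I_N)
    ((fun u => `|derive1 (F j) (query A (derive1 (F j)) u i)|) @^-1` [set x | x < eps]).
  by apply/seteqP; split => u /= [i iN h]; exists i.
rewrite bigcup_mkord; apply: bigsetU_measurable => i _; apply: measurableT_preimage.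
  apply: measurableT_comp (measurable_grad_query i jK).
  by apply: continuous_measurable_fun; exact: norm_continuous.
by apply: open_measurable; exact: open_lt.
Qed.

Lemma finds_stationary_sub_departures j : (j < K)%N ->
  finds_stationary (F j) N eps `<=`
  \big[setU/set0]_(i < N) first_departure (derive1 (F j)) c0 i.
Proof.
move=> jK u [i iN st]; apply: first_departure_cover; exists i => // e.
by move: st; rewrite /stationary e; apply/negP; rewrite -leNgt.
Qed.

Lemma departures_disjoint {i j k u} : (j < K)%N -> (k < K)%N ->
  first_departure (derive1 (F j)) c0 i u ->
  first_departure (derive1 (F k)) c0 i u -> j = k.
Proof.
move=> jK kK dj dk.
apply: (F_departures_disjoint j k (query A (fun=> c0) u i) jK kK).
  by rewrite -(first_departure_query dj); case: dj.
by rewrite -(first_departure_query dk); case: dk.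
Qed.

Lemma departure_probs_le1 i :
  (\sum_(j < K) P (first_departure (derive1 (F j)) c0 i) <= 1)%E.
Proof.
have mD (j : 'I_K) : measurable (first_departure (derive1 (F j)) c0 i).
  by apply: measurable_first_departure => k; exact: measurable_grad_query.
rewrite -(measure_bigsetU_ord P xpredT mD).
  by apply: probability_le1; apply: bigsetU_measurable.
move=> j k _ _ [u [dj dk]]; apply: val_inj.
exact: (departures_disjoint (ltn_ord j) (ltn_ord k) dj dk).
Qed.

Lemma half_le_departure_probs j : (j < K)%N ->
  ((1 / 2 : R)%:E <= \sum_(i < N) P (first_departure (derive1 (F j)) c0 i))%E.
Proof.
move=> jK; apply: le_trans (A_succ (F j) (F_class j jK)) _.
apply: content_subadditive.
- by move=> i _; apply: measurable_first_departure => k; exact: measurable_grad_query.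
- exact: measurable_finds_stationary.
- exact: finds_stationary_sub_departures.
Qed.

Lemma family_size_le_queries : K%:R / 2 <= N%:R :> R.
Proof.
rewrite -lee_fin.
have -> : (K%:R / 2 : R)%:E = (\sum_(j < K) (1 / 2 : R)%:E)%E.
  by rewrite sumEFin sumr_const card_ord -(mulr_natl (1 / 2 : R) K) mul1r.
apply: le_trans.
  by apply: lee_sum => j _; exact: half_le_departure_probs.
rewrite exchange_big /=; apply: le_trans.
  by apply: lee_sum => i _; exact: departure_probs_le1.
by rewrite sumEFin sumr_const card_ord.
Qed.

End Counting.

Theorem theorem2p1 (R : realType) :
  exists c : R, 0 < c /\
  forall eps : R, 0 < eps -> eps < 1 / 8 ->
  forall (d : measure_display) (T : measurableType d) (P : probability T R)
         (A : rand_alg T) (N : nat),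
    measurable_alg A -> rand_succeeds P A N eps ->
    c / eps <= N%:R.
Proof.
exists (1 / 32); split; first lra.
move=> eps eps_gt0 eps_small d T P A N A_meas A_succ.
pose r : R := 1 / 2; pose c : R := 2 * eps; pose p : R := 1 / (8 * eps).
have p_gt1 : 1 < p by rewrite /p ltr_pdivlMr; lra.
have r_gt0 : 0 < r by rewrite /r; lra.
have rp : 2 * r < p by rewrite /r; lra.
have cp : c * p = r ^+ 2 by rewrite /c /p /r; field; lra.
pose K := Num.truncn p.
have /andP[K_le K_gt] : K%:R <= p < K.+1%:R by apply: truncn_itv; lra.
rewrite -natr1 in K_gt.
have K_ge1 : 1 <= K%:R :> R by rewrite ler1n -(ltr0n R); lra.
have -> : 1 / 32 / eps = p / 4 by rewrite /p; field; lra.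
suff : K%:R / 2 <= N%:R :> R by lra.
apply: (@family_size_le_queries R d T P A N K eps c
  (fun j z => hard_fun r c p (z - j%:R)) A_meas A_succ).
- by move=> j _; apply: shifted_hard_fun_in_class => //; rewrite /c /r; lra.
- by rewrite /c ger0_norm; lra.
- move=> j k x jK kK.
  apply: (@shifted_hard_grads_disjoint R r c p K j k x r_gt0 rp cp) => //;
    by rewrite /r; lra.
Qed.
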